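(* Let $\iota:\emptyset\to\{\bullet\}$ and let $\sigma:S\to\{\bullet\}$ be the map from the Sierpinski space $S=\{o,c\}$ (open sets $\emptyset,\{o\},S$) to a point. Then, in $\mathrm{Top}$, $\{\iota\}^{rrrr}=\{\sigma\}^r$, and this is the class of continuous maps $f:X\to Y$ such that each fibre $f^{-1}(y)$, $y\in Y$, with the subspace topology satisfies the separation axiom $T_1$.
   Context: For continuous maps $f:A\to B$, $g:C\to D$, $f\pitchfork g$ means: for all continuous $t:A\to C$, $b:B\to D$ with $g\circ t=b\circ f$ there is continuous $d:B\to C$ with $d\circ f=t$, $g\circ d=b$. For a class $P$, $P^r=\{g: f\pitchfork g\ \forall f\in P\}$ and $P^{rrrr}=(((P^r)^r)^r)^r$. *)

From HB Require Import structures.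
From mathcomp Require Import all_boot all_classical all_reals.
From mathcomp Require Import topology initial_topology separation_axioms.

Unset Implicit Arguments.
Unset Strict Implicit.
Unset Printing Implicit Defensive.

Local Open Scope classical_set_scope.

(** A class of morphisms of Top: a predicate on maps between topological
    spaces (only continuous maps are ever considered, see [rorth]). *)
Definition mclass := forall (A B : topologicalType), (A -> B) -> Prop.

Definition lifts {A B C D : topologicalType} (f : A -> B) (g : C -> D) : Prop :=
  forall (t : A -> C) (b : B -> D), continuous t -> continuous b ->
    g \o t = b \o f ->
    exists d : B -> C, [/\ continuous d, d \o f = t & g \o d = b].

Definition rorth (P : mclass) : mclass :=
  fun C D g => continuous g /\ forall (A B : topologicalType) (f : A -> B),
    P A B f -> lifts f g.

Definition rorth4 (P : mclass) : mclass := rorth (rorth (rorth (rorth P))).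

Definition single {X Y : topologicalType} (h : X -> Y) : mclass :=
  fun A B f => existT (fun p : topologicalType * topologicalType => p.1 -> p.2)
                      (A, B) f
             = existT (fun p : topologicalType * topologicalType => p.1 -> p.2)
                      (X, Y) h.

(** The empty space and the one-point space (each carries a unique topology). *)
Definition emptysp : topologicalType := discrete_topology void.
Definition pointsp : topologicalType := discrete_topology unit.

(** Sierpinski space S = {o, c}: o := true, c := false;
    open sets are those U with (c ∈ U -> o ∈ U), i.e. ∅, {o}, S. *)
Definition sierpinski : Type := bool.
HB.instance Definition _ := Choice.copy sierpinski bool.

Definition sierp_open : set_system sierpinski :=
  fun U => U false -> U true.

Lemma sierp_openT : sierp_open setT.
Proof. by []. Qed.

Lemma sierp_openI : setI_closed sierp_open.
Proof. by move=> U V hU hV [/hU ? /hV ?]. Qed.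

Lemma sierp_open_bigU (I : Type) (f : I -> set sierpinski) :
  (forall i, sierp_open (f i)) -> sierp_open (\bigcup_i f i).
Proof. by move=> h [i _ fi]; exists i => //; apply: h. Qed.

HB.instance Definition _ := isOpenTopological.Build sierpinski
  sierp_openT sierp_openI sierp_open_bigU.

Definition sierpT : topologicalType := sierpinski.

Definition iota_map : emptysp -> pointsp := fun v => of_void unit v.
Definition sigma_map : sierpT -> pointsp := fun _ => tt.

(** The fibre f^{-1}(y) with the subspace (= initial) topology. *)
Definition fibre_space {X Y : topologicalType} (f : X -> Y) (y : Y)
  : topologicalType :=
  initial_topology (@proj1_sig X (fun x => x \in f @^-1` [set y])).

From HB Require Import structures.
From mathcomp Require Import all_boot all_classical all_reals.
From mathcomp Require Import topology initial_topology separation_axioms.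

(** The class {ι}^r consists of the surjections, and {ι}^rr contains every
    injective initial map (an embedding); conversely every map in {ι}^rr is
    initial, and σ lifts against initial maps, so σ ∈ {ι}^rrr and
    {ι}^rrrr ⊆ {σ}^r.  Lifting against σ says that two points of a fibre one
    of which lies in every neighbourhood of the other coincide, i.e. that the
    fibres are T1.  For the reverse inclusion, a map k ∈ {ι}^rrr has the right
    lifting property against the embeddings ∅ → Y and {0, 1} → V, where V adds
    to the discrete two-point space a point whose only neighbourhood is V.
    The first gives a continuous section s of k; the second joins x and
    s (k x) by a map from V inside a fibre of k, so for a square from k to a
    map with T1 fibres the top map t satisfies t (s (k x)) = t x, and t ∘ s is
    the diagonal. *)

Set Implicit Arguments.
Unset Strict Implicit.
Unset Printing Implicit Defensive.

Local Open Scope classical_set_scope.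

Lemma rorth_single (X Y C D : topologicalType) (h : X -> Y) (g : C -> D) :
  rorth (single h) C D g <-> continuous g /\ lifts h g.
Proof.
split=> [[cg hg]|[cg hg]]; first by split=> //; apply: hg.
split=> // A B f hf.
pose lifts_g (s : {p : topologicalType * topologicalType & p.1 -> p.2}) :=
  lifts (projT2 s) g.
by change (lifts_g (existT _ (A, B) f)); rewrite hf.
Qed.

Lemma discrete_continuous (T : choiceType) (M : topologicalType)
    (f : discrete_topology T -> M) :
  continuous f.
Proof. by apply/continuousP => U _; apply: discrete_open. Qed.

Lemma lifts_iotaP (C D : topologicalType) (g : C -> D) :
  lifts iota_map g <-> forall y, exists x, g x = y.
Proof.
split=> [gl y|gsurj t b _ _ _].
- have cy : continuous (fun _ : pointsp => y) by apply: cst_continuous.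
  have sq : g \o of_void C = (fun=> y) \o iota_map by apply/funext; case.
  have [d [_ _ gd]] := gl _ _ (fun v => of_void _ v) cy sq.
  by exists (d tt); rewrite -[y]/((fun=> y) tt) -gd.
- have [x gx] := gsurj (b tt).
  exists (fun=> x); split; first exact: cst_continuous.
  + by apply/funext; case.
  + by apply/funext; case.
Qed.

Definition initial_map {A B : topologicalType} (h : A -> B) : Prop :=
  forall U : set A, open U -> exists2 V : set B, open V & h @^-1` V = U.

Lemma injective_initial_rorth2_iota (A B : topologicalType) (h : A -> B) :
    continuous h -> injective h -> initial_map h ->
  rorth (rorth (single iota_map)) A B h.
Proof.
move=> ch hinj hinit; split=> // C D g /rorth_single[_ /lifts_iotaP gsurj].
move=> t b _ cb htE.
have bgE c : b (g c) = h (t c) by rewrite -[RHS]/((h \o t) c) htE.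
pose s y := proj1_sig (cid (gsurj y)).
have gs y : g (s y) = y := proj2_sig (cid (gsurj y)).
exists (t \o s); split.
- apply/continuousP => _ /hinit[V oV <-].
  suff -> : (t \o s) @^-1` (h @^-1` V) = b @^-1` V by apply: open_comp.
  by apply/seteqP; split=> y /=; rewrite -bgE gs.
- by apply/funext => c /=; apply: hinj; rewrite -!bgE gs.
- by apply/funext => y /=; rewrite -bgE gs.
Qed.

Lemma rorth2_iota_initial (A B : topologicalType) (h : A -> B) :
  rorth (rorth (single iota_map)) A B h -> initial_map h.
Proof.
move=> [ch hl] U oU.
have cAW : continuous (id : A -> initial_topology h).
  exact: continuous_comp_initial.
have cA : continuous (@id A) by move=> x.
have id_rorth : rorth (single iota_map) A (initial_topology h) id.
  by apply/rorth_single; split=> //; apply/lifts_iotaP => y; exists y.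
have [d [cd dE _]] := hl _ _ _ id_rorth id (h : initial_topology h -> B)
  cA (@initial_continuous _ _ h) erefl.
have did : d = id := dE.
by move/continuousP: cd => /(_ U oU); rewrite did.
Qed.

Lemma continuous_sierpP (M : topologicalType) (u : sierpT -> M) :
  continuous u <-> forall U, open U -> U (u false) -> U (u true).
Proof.
split=> [/continuousP cu U oU|cu]; first exact: cu.
by apply/continuousP => U oU; apply: cu.
Qed.

Lemma continuous_sierp_indicator (B : topologicalType) (V : set B) :
  open V -> continuous (fun y => `[< V y >] : sierpT).
Proof.
move=> oV; apply/continuousP => O oO.
have [Ofalse|Onfalse] := pselect (O false).
  suff -> : (fun y => `[< V y >] : sierpT) @^-1` O = setT by apply: openT.
  by apply/seteqP; split=> // y _ /=; case: asboolP => // _; apply: oO.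
have [Otrue|Ontrue] := pselect (O true).
  suff -> : (fun y => `[< V y >] : sierpT) @^-1` O = V by [].
  by apply/seteqP; split=> y /=; case: asboolP.
suff -> : (fun y => `[< V y >] : sierpT) @^-1` O = set0 by apply: open0.
by apply/seteqP; split=> y //=; case: asboolP.
Qed.

Lemma initial_lifts_sigma (A B : topologicalType) (h : A -> B) :
  initial_map h -> lifts h sigma_map.
Proof.
move=> hinit t b ct _ _.
have otrue : open (t @^-1` [set true]) by move/continuousP: ct; apply.
have [V oV hVE] := hinit _ otrue.
exists (fun y => `[< V y >]); split.
- exact: continuous_sierp_indicator.
- apply/funext => x /=.
  have hVx : V (h x) = (t x = true) := congr1 (fun S => S x) hVE.
  by rewrite hVx; case: (t x); [apply: asboolT | apply: asboolF].
- by apply/funext => y; case: (b y).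
Qed.

Lemma sigma_rorth3_iota :
  rorth (rorth (rorth (single iota_map))) sierpT pointsp sigma_map.
Proof.
split; first exact: cst_continuous.
by move=> A B h /rorth2_iota_initial /initial_lifts_sigma.
Qed.

Definition fibrewise_T1 {M N : topologicalType} (m : M -> N) : Prop :=
  forall p q, m p = m q -> (forall U, open U -> U q -> U p) -> p = q.

Lemma lifts_sigmaP (M N : topologicalType) (m : M -> N) :
  lifts sigma_map m <-> fibrewise_T1 m.
Proof.
split=> [ml p q mpq qp|mT1 t b ct _ mtE].
- pose u (v : sierpT) := if v then p else q.
  have cu : continuous u by apply/continuous_sierpP.
  have cmp : continuous (fun _ : pointsp => m p) by apply: cst_continuous.
  have sq : m \o u = (fun=> m p) \o sigma_map by apply/funext; case.
  have [d [_ du _]] := ml _ _ cu cmp sq.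
  by rewrite -[p]/(u true) -[q]/(u false) -du.
- have mt v : m (t v) = b tt := congr1 (fun F => F v) mtE.
  have tE : t true = t false.
    by apply: mT1; [rewrite !mt | move/continuous_sierpP: ct].
  exists (fun=> t true); split; first exact: cst_continuous.
  + by apply/funext; case.
  + by apply/funext; case; rewrite /= mt.
Qed.

Lemma fibrewise_T1P (M N : topologicalType) (m : M -> N) :
  fibrewise_T1 m <-> forall y, accessible_space (fibre_space m y).
Proof.
split=> [mT1 y [p fp] [q fq] pq|mT1 p q mpq qp].
- have mp : m p = y by move: (fp); rewrite inE.
  have mq : m q = y by move: (fq); rewrite inE.
  have [U [oU Up nUq]] : exists U, [/\ open U, U p & ~ U q].
    apply: contrapT => noU; move/eqP: pq; apply.
    have qp : q = p.
      apply: mT1 => [|U oU Uq]; first by rewrite mp mq.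
      by apply: contrapT => nUp; apply: noU; exists U.
    by subst q; congr exist; apply: Prop_irrelevance.
  exists (@proj1_sig M _ @^-1` U).
  by split; [exists U | rewrite inE | rewrite inE].
- apply: contrapT => npq.
  have fp : p \in m @^-1` [set m p] by rewrite inE.
  have fq : q \in m @^-1` [set m p] by rewrite inE /= mpq.
  have [|W [[U oU <-] Wq Wp]] := mT1 (m p) (exist _ q fq) (exist _ p fp).
    by apply/eqP => -[qpE]; apply: npq.
  by rewrite !inE /= in Wq Wp; apply: Wp; apply: qp.
Qed.

(** [Some true] and [Some false] are open points; the only neighbourhood of
    [None] is the whole space. *)
Definition vee : Type := option bool.
HB.instance Definition _ := Choice.copy vee (option bool).

Definition vee_open : set_system vee :=
  fun U => U None -> U (Some true) /\ U (Some false).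

Lemma vee_openT : vee_open setT.
Proof. by []. Qed.

Lemma vee_openI : setI_closed vee_open.
Proof. by move=> U V oU oV [/oU[? ?] /oV[? ?]]. Qed.

Lemma vee_open_bigU (I : Type) (f : I -> set vee) :
  (forall i, vee_open (f i)) -> vee_open (\bigcup_i f i).
Proof. by move=> of_ [i _ fi]; have [? ?] := of_ i fi; split; exists i. Qed.

HB.instance Definition _ :=
  isOpenTopological.Build vee vee_openT vee_openI vee_open_bigU.

Lemma vee_open_None (U : set vee) (b : bool) : open U -> U None -> U (Some b).
Proof. by move=> oU /oU[]; case: b. Qed.

Lemma Some_rorth2_iota :
  rorth (rorth (single iota_map)) (discrete_topology bool) vee Some.
Proof.
apply: injective_initial_rorth2_iota.
- exact: discrete_continuous.
- by move=> ? ? [].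
- move=> U _; exists (Some @` U); first by move=> [b _].
  by apply/seteqP; split=> [b [c Uc [<-]] | b Ub] //; exists b.
Qed.

Lemma of_void_rorth2_iota (Y : topologicalType) :
  rorth (rorth (single iota_map)) emptysp Y (fun v => of_void Y v).
Proof.
apply: injective_initial_rorth2_iota; [by case | by case |].
by move=> U _; exists set0; [apply: open0 | apply/seteqP; split; case].
Qed.

Lemma fibrewise_T1_vee (M N : topologicalType) (m : M -> N) (u : vee -> M) :
    fibrewise_T1 m -> continuous u -> (forall z, m (u z) = m (u None)) ->
  u (Some true) = u (Some false).
Proof.
move=> mT1 cu mu.
have uE b : u (Some b) = u None.
  apply: mT1 => [|U oU]; first exact: mu.
  by apply: (@vee_open_None (u @^-1` U)); move/continuousP: cu; apply.
by rewrite !uE.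
Qed.

Section RightOrthogonalToEmbeddings.
Variables (X Y : topologicalType) (k : X -> Y).
Hypothesis kP : rorth (rorth (rorth (single iota_map))) X Y k.

Lemma rorth3_iota_section : exists2 s : Y -> X, continuous s & cancel s k.
Proof.
have cv : continuous (fun v : emptysp => of_void X v) by case.
have sq : k \o (fun v => of_void X v) = id \o (fun v => of_void Y v).
  by apply/funext; case.
have cY : continuous (@id Y) by move=> y.
have [s [cs _ ks]] := kP.2 _ _ _ (of_void_rorth2_iota Y) _ _ cv cY sq.
by exists s => // y; rewrite -[RHS]/(id y) -ks.
Qed.

Lemma rorth3_iota_vee (x x' : X) : k x = k x' ->
  exists u : vee -> X,
    [/\ continuous u, u (Some true) = x, u (Some false) = x'
      & forall z, k (u z) = k x].
Proof.
move=> kxx'.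
pose t (v : discrete_topology bool) := if v then x else x'.
have ct : continuous t by apply: discrete_continuous.
have cx : continuous (fun _ : vee => k x) by apply: cst_continuous.
have sq : k \o t = (fun=> k x) \o Some by apply/funext; case.
have [u [cu ut ku]] := kP.2 _ _ _ Some_rorth2_iota _ _ ct cx sq.
exists u; split=> //.
- by rewrite -[x]/(t true) -ut.
- by rewrite -[x']/(t false) -ut.
- by move=> z; rewrite -[RHS]/((fun=> k x) z) -ku.
Qed.

Lemma rorth3_iota_lifts_fibrewise_T1 (M N : topologicalType) (m : M -> N) :
  fibrewise_T1 m -> lifts k m.
Proof.
move=> mT1 t b ct cb mtE.
have mt x : m (t x) = b (k x) := congr1 (fun F => F x) mtE.
have [s cs ks] := rorth3_iota_section.
have tsk x : t (s (k x)) = t x.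
  have [u [cu uT uF ku]] := rorth3_iota_vee (esym (ks (k x))).
  rewrite -uF -uT; apply: esym; apply: (fibrewise_T1_vee (u := t \o u) mT1).
    by move=> z; apply: continuous_comp; [apply: cu | apply: ct].
  by move=> z /=; rewrite !mt !ku.
exists (t \o s); split.
- by move=> y; apply: continuous_comp; [apply: cs | apply: ct].
- by apply/funext => x /=; rewrite tsk.
- by apply/funext => y /=; rewrite mt ks.
Qed.

End RightOrthogonalToEmbeddings.

Theorem mainTheorem13 :
  (forall (X Y : topologicalType) (f : X -> Y),
      rorth4 (single iota_map) X Y f <-> rorth (single sigma_map) X Y f) /\
  (forall (X Y : topologicalType) (f : X -> Y),
      rorth (single sigma_map) X Y f <->
      (continuous f /\ forall y : Y, accessible_space (fibre_space f y))).
Proof.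
split=> X Y f; rewrite rorth_single lifts_sigmaP; last by rewrite fibrewise_T1P.
split=> [[cf fl]|[cf fT1]].
- by split=> //; apply/lifts_sigmaP/fl/sigma_rorth3_iota.
- by split=> // A B k kP; apply: rorth3_iota_lifts_fibrewise_T1.
Qed.
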